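(* Let $G$ be a topological group and $H$ a closed subgroup of finite index, with Bohr compactification $(\operatorname{Bohr}(H),\beta)$. Fix a transversal $X$ for the right cosets, $G=\bigsqcup_{x\in X}Hx$, and for $g\in G$, $x\in X$ let $x\cdot g\in X$ and $c(x,g)\in H$ be the unique elements with $xg=c(x,g)(x\cdot g)$. Let $\sigma(g)\in{\rm Sym}(X)$ be $x\mapsto x\cdot g^{-1}$. Define the compact group $\operatorname{Ind}(\operatorname{Bohr}(H),X)=\operatorname{Bohr}(H)^X\rtimes{\rm Sym}(X)$, where ${\rm Sym}(X)$ acts by $\tau((k_x)_{x\in X})=(k_{\tau^{-1}(x)})_{x\in X}$, and define $\widetilde\beta:G\to\operatorname{Ind}(\operatorname{Bohr}(H),X)$ by $\widetilde\beta(g)=\big((\beta(c(x,g)))_{x\in X},\sigma(g)\big)$. Then $\widetilde\beta$ is a continuous homomorphism, and the closure of $\widetilde\beta(G)$ in $\operatorname{Ind}(\operatorname{Bohr}(H),X)$, together with $\widetilde\beta$, is a Bohr compactification of $G$.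
   Context: A Bohr compactification of a topological group $G$ is a pair $(B,\beta)$ with $B$ compact and $\beta:G\to B$ a continuous homomorphism with dense image such that every continuous homomorphism from $G$ to a compact group $L$ factors as $\alpha'\circ\beta$ with $\alpha':B\to L$ continuous. *)

From HB Require Import structures.
From mathcomp Require Import all_boot all_order all_fingroup.
From mathcomp Require Import all_classical topology.
From mathcomp Require Import finmap.

Set Implicit Arguments.
Unset Strict Implicit.
Unset Printing Implicit Defensive.

Local Open Scope classical_set_scope.

#[short(type="groupTopType")]
HB.structure Definition GroupTop := {G of monoid.Group G & Topological G}.

HB.mixin Record GroupTop_isTopGroup G of GroupTop G := {
  mulg_continuous : continuous (fun p : G * G => (p.1 * p.2)%g);
  invg_continuous : continuous (fun x : G => (x^-1)%g)
}.

#[short(type="topGroupType")]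
HB.structure Definition TopGroup := {G of GroupTop_isTopGroup G & GroupTop G}.

Definition is_subgroup (G : groupType) (S : set G) : Prop :=
  [/\ S 1%g, (forall x y, S x -> S y -> S (x * y)%g) & (forall x, S x -> S (x^-1)%g)].

Definition hom_on (G L : groupType) (A : set G) (f : G -> L) : Prop :=
  forall x y, A x -> A y -> f (x * y)%g = (f x * f y)%g.

Definition compact_group_on (K : groupTopType) (S : set K) : Prop :=
  [/\ is_subgroup S,
      {within S `*` S, continuous (fun p : K * K => (p.1 * p.2)%g)},
      {within S, continuous (fun x : K => (x^-1)%g)},
      compact S & hausdorff_space (subspace S)].

(** Bohr compactification, for the source group being a subgroup [A] of a
    topological group [G] (with the subspace topology) and the compact group
    being a subgroup [S] of [K] (with the subspace topology):
    (S, beta|_A) is a Bohr compactification of A. *)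
Definition bohr_compactification (G : topGroupType) (A : set G)
    (K : groupTopType) (S : set K) (beta : G -> K) : Prop :=
  compact_group_on S /\
  (beta @` A `<=` S /\ hom_on A beta /\ {within A, continuous beta}) /\
  S `<=` closure (beta @` A) /\
  (forall (L : topGroupType), compact [set: L] -> hausdorff_space L ->
   forall f : G -> L, hom_on A f -> {within A, continuous f} ->
   exists alpha : K -> L,
     [/\ hom_on S alpha, {within S, continuous alpha} &
         forall a, A a -> f a = alpha (beta a)]).

(** The induced group Ind(B, X) = B^X ⋊ Sym(X), with Sym(X) acting by
    tau((k_x)_x) = (k_{tau^-1 x})_x; product topology on B^X, discrete on
    Sym(X). *)
Section Ind.
Variables (B : groupTopType) (X : finType).

Definition Ind : Type :=
  (prod_topology (fun _ : X => B) * discrete_topology {perm X})%type.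

HB.instance Definition _ := Topological.on Ind.

Definition ind_one : Ind := ((fun _ => 1%g) : prod_topology _, 1%g).
Definition ind_mul (a b : Ind) : Ind :=
  ((fun x => a.1 x * b.1 ((a.2^-1)%g x))%g : prod_topology _,
   (* composition a.2 o b.2 ; mathcomp: (s * t) x = t (s x) *)
   (b.2 * a.2)%g).
Definition ind_inv (a : Ind) : Ind :=
  ((fun x => (a.1 (a.2 x))^-1)%g : prod_topology _, (a.2^-1)%g).

Lemma ind_mulA : associative ind_mul.
Proof.
move=> [a s] [b t] [c u]; rewrite /ind_mul /=; congr pair; last by rewrite mulgA.
by apply: funext => x /=; rewrite mulgA invMg permM.
Qed.

Lemma ind_mul1 : left_id ind_one ind_mul.
Proof.
move=> [a s]; rewrite /ind_mul /=; congr pair; last by rewrite mulg1.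
by apply: funext => x /=; rewrite invg1 perm1 mul1g.
Qed.

Lemma ind_mulg1 : right_id ind_one ind_mul.
Proof.
move=> [a s]; rewrite /ind_mul /=; congr pair; last by rewrite mul1g.
by apply: funext => x /=; rewrite mulg1.
Qed.

Lemma ind_mulV : left_inverse ind_one ind_inv ind_mul.
Proof.
move=> [a s]; rewrite /ind_mul /ind_inv /=; congr pair; last by rewrite mulgV.
by apply: funext => x /=; rewrite invgK mulVg.
Qed.

Lemma ind_mulgV : right_inverse ind_one ind_inv ind_mul.
Proof.
move=> [a s]; rewrite /ind_mul /ind_inv /=; congr pair; last by rewrite mulVg.
by apply: funext => x /=; rewrite permKV mulgV.
Qed.

HB.instance Definition _ := isGroup.Build Ind
  ind_mulA ind_mul1 ind_mulg1 ind_mulV ind_mulgV.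

End Ind.

From HB Require Import structures.
From mathcomp Require Import all_boot all_order all_fingroup.
From mathcomp Require Import all_classical topology.
From mathcomp Require Import finmap.

(* Then beta_ind is a continuous homomorphism, the closure of its range is a
   compact group, and a continuous homomorphism f : G -> L factors through it
   via k |-> f(x0)^-1 alpha_H(k_x0) f(k^-1 x0), where alpha_H : B -> L extends
   f on H; multiplicativity on the closure follows by density. *)

Local Open Scope classical_set_scope.

Lemma prod_topology_cvg (T : Type) (I : eqType) (K : I -> topologicalType)
    (F : set_system T) (h : T -> prod_topology K) (l : prod_topology K) :
  Filter F -> (forall i, (fun t => h t i) @ F --> l i) -> h @ F --> l.
Proof.
move=> FF hcvg; apply/cvg_sup => i U [? /= [[W oW <-]]] /= Wl /filterS; apply.
exact/hcvg/open_nbhs_nbhs.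
Qed.

Lemma closure_sub_closed (T U : topologicalType) (f : T -> U) (E : set T) (D : set U) :
  continuous f -> closed D -> (forall x, E x -> D (f x)) ->
  forall x, closure E x -> D (f x).
Proof.
move=> cf cD fED x Ex.
have /closure_id cfD : closed (f @^-1` D).
  by apply: preimage_closed => // y _; exact: cf.
suff : (f @^-1` D) x by [].
by rewrite cfD; apply: closureS Ex => y /fED.
Qed.

Lemma closure_eq {T U : topologicalType} (f g : T -> U) (E : set T) :
  hausdorff_space U -> continuous f -> continuous g ->
  (forall x, E x -> f x = g x) -> forall x, closure E x -> f x = g x.
Proof.
move=> hU cf cg fg x; rewrite closureEcvg => -[F PF [Fx EF]].
apply: (cvg_unique hU (F := f @ F)); first exact: cvg_trans (cvg_app f Fx) (cf x).
apply: cvg_trans (near_eq_cvg _) (cvg_trans (cvg_app g Fx) (cg x)).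
by apply: filterS (EF E (fun _ => id)) => y Ey; rewrite fg.
Qed.

Lemma fst_continuous (U V : topologicalType) : continuous (@fst U V).
Proof. by move=> p; apply: cvg_fst. Qed.

Lemma snd_continuous (U V : topologicalType) : continuous (@snd U V).
Proof. by move=> p; apply: cvg_snd. Qed.

Lemma hausdorff_pair (U V : topologicalType) :
  hausdorff_space U -> hausdorff_space V -> hausdorff_space (U * V)%type.
Proof.
move=> hU hV [p1 p2] [q1 q2] cl; congr pair.
- apply: hU => A A' nA nA'.
  have [[z1 z2] [/= Az A'z]] := cl _ _ (cvg_fst nA) (cvg_fst nA').
  by exists z1.
- apply: hV => A A' nA nA'.
  have [[z1 z2] [/= Az A'z]] := cl _ _ (cvg_snd nA) (cvg_snd nA').
  by exists z2.
Qed.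

Lemma within_continuous_comp {S T U : topologicalType} {A : set T}
    {f : T -> U} {m : S -> T} {s0 : S} :
  {within A, continuous f} -> continuous m ->
  A (m s0) -> (\forall s \near s0, A (m s)) -> {for s0, continuous (f \o m)}.
Proof.
move=> /subspace_continuousP cf cm Am0 Am_near U' /(cf _ Am0)/(cm s0).
by apply: filterS2 Am_near => s Ams; apply.
Qed.

Lemma hausdorff_subspaceT (T : topologicalType) :
  hausdorff_space (subspace [set: T]) -> hausdorff_space T.
Proof.
move=> hS p q cl; apply: (hS p q) => A A'.
by rewrite !nbhs_subspaceT; exact: cl.
Qed.

Section Homomorphisms.
Variables (G L : groupType) (f : G -> L).
Hypothesis fM : forall x y, f (x * y)%g = (f x * f y)%g.

Lemma hom1 : f 1%g = 1%g.
Proof. by apply: (@mulgI _ (f 1%g)); rewrite -fM !mulg1. Qed.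

Lemma homV x : f (x^-1)%g = ((f x)^-1)%g.
Proof. by apply: (@mulgI _ (f x)); rewrite -fM !mulgV hom1. Qed.

Lemma hom_range_subgroup : is_subgroup (range f).
Proof.
split; first by exists 1%g; rewrite ?hom1.
- by move=> _ _ [g _ <-] [h _ <-]; exists (g * h)%g; rewrite ?fM.
- by move=> _ [g _ <-]; exists (g^-1)%g; rewrite ?homV.
Qed.

End Homomorphisms.

Section TopologicalGroups.
Context {K : topGroupType}.

Lemma continuousM (T : topologicalType) (f g : T -> K) :
  continuous f -> continuous g -> continuous (fun t => f t * g t)%g.
Proof.
move=> cf cg t.
apply: (@continuous2_cvg _ _ _ _ _ _ f g (fun u v : K => u * v)%g) (cf t) (cg t).
exact: (@mulg_continuous K (f t, g t)).
Qed.

Lemma mulg_left_continuous (a : K) : continuous (fun y : K => a * y)%g.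
Proof. by apply: continuousM; [exact: cst_continuous | move=> y; exact: cvg_id]. Qed.

Lemma mulg_right_continuous (a : K) : continuous (fun y : K => y * a)%g.
Proof. by apply: continuousM; [move=> y; exact: cvg_id | exact: cst_continuous]. Qed.

Lemma mulg_two_sided_continuous (a b : K) : continuous (fun y : K => a * y * b)%g.
Proof. by apply: continuousM; [exact: mulg_left_continuous | exact: cst_continuous]. Qed.

Lemma closure_subgroup (S : set K) : is_subgroup S -> is_subgroup (closure S).
Proof.
move=> [S1 SM SV]; split; first exact: subset_closure.
- have mulS_closure a : S a -> forall y, closure S y -> closure S (a * y)%g.
    move=> Sa; apply: closure_sub_closed (mulg_left_continuous a) (@closed_closure _ _) _.
    by move=> y Sy; apply/subset_closure/SM.
  move=> x y Sx Sy.
  apply: (@closure_sub_closed _ _ (fun x => x * y)%g S (closure S)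
           (mulg_right_continuous y) (@closed_closure _ _) _ x Sx).
  by move=> z Sz; apply: mulS_closure.
- apply: closure_sub_closed (@invg_continuous K) (@closed_closure _ _) _.
  by move=> x Sx; apply/subset_closure/SV.
Qed.

Lemma closure_compact_group (S : set K) :
  is_subgroup S -> compact [set: K] -> hausdorff_space K ->
  compact_group_on (closure S).
Proof.
move=> sS cK hK; split.
- exact: closure_subgroup.
- exact/continuous_subspaceT/mulg_continuous.
- exact/continuous_subspaceT/invg_continuous.
- exact: subclosed_compact (@closed_closure _ _) cK _.
- exact: subspace_hausdorff.
Qed.

End TopologicalGroups.

(* A continuous map into a Hausdorff group that is multiplicative on a set S
   is multiplicative on closure S: extend the identity first in the second
   factor, then in the first one, each time by density. *)
Lemma hom_closure (K L : topGroupType) (alpha : K -> L) (S : set K) :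
  hausdorff_space L -> continuous alpha ->
  (forall x y, S x -> S y -> alpha (x * y)%g = (alpha x * alpha y)%g) ->
  hom_on (closure S) alpha.
Proof.
move=> hL calpha aM.
have comp_continuous (u : K -> K) (v : L -> L) : continuous u -> continuous v ->
    continuous (alpha \o u) /\ continuous (v \o alpha).
  by move=> cu cv; split=> x; [exact: continuous_comp (cu x) (calpha _) |
                                exact: continuous_comp (calpha x) (cv _)].
have aM_left a : S a -> forall y, closure S y -> alpha (a * y)%g = (alpha a * alpha y)%g.
  move=> Sa; have [c1 c2] := comp_continuous _ _ (mulg_left_continuous a)
                                              (mulg_left_continuous (alpha a)).
  by apply: (closure_eq _ _ S hL c1 c2) => y Sy; apply: aM.
move=> x y Sx Sy.
have [c1 c2] := comp_continuous _ _ (mulg_right_continuous y)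
                                    (mulg_right_continuous (alpha y)).
by apply: (closure_eq _ _ S hL c1 c2 _ x Sx) => z Sz; apply: aM_left.
Qed.

Section IndTopologicalGroup.
Context {B : topGroupType} {X : finType}.

Lemma ind_coord_continuous (x : X) : continuous (fun a : Ind B X => a.1 x).
Proof.
move=> a; apply: (@continuous_comp _ (prod_topology (fun _ : X => B)) _ fst
  (fun k => k x)); first exact: cvg_fst.
exact: (@proj_continuous X (fun _ => B) x).
Qed.

(* Sym(X) is discrete, so the permutation part is locally constant. *)
Lemma ind_perm_near (a : Ind B X) : \forall b \near a, b.2 = a.2.
Proof.
have : (fun b : Ind B X => b.2) @ nbhs a --> a.2 by exact: cvg_snd.
by move/discrete_cvg; apply.
Qed.

Lemma ind_cvg (T : Type) (F : set_system T) (h : T -> Ind B X) (l : Ind B X) :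
  Filter F -> (forall x, (fun t => (h t).1 x) @ F --> l.1 x) ->
  (\forall t \near F, (h t).2 = l.2) -> h @ F --> l.
Proof.
move=> FF h1 h2.
have -> : h = fun t => ((h t).1, (h t).2) by apply: funext => t; case: (h t).
case: l h1 h2 => l1 l2 h1 h2.
have P1 : (fun t => (h t).1) @ F --> l1 by exact: prod_topology_cvg.
have P2 : (fun t => (h t).2) @ F --> l2 by exact: cvg_near_cst.
exact: cvg_pair P1 P2.
Qed.

(* Near (a, b) the permutations are frozen to a.2, b.2, so each coordinate of
   the product is a product of two coordinates. *)
Lemma ind_mul_continuous :
  continuous (fun p : Ind B X * Ind B X => (p.1 * p.2)%g).
Proof.
move=> [a b].
have perm1_near : \forall p \near (a, b), (p : Ind B X * Ind B X).1.2 = a.2.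
  exact: cvg_fst (ind_perm_near a).
have perm2_near : \forall p \near (a, b), (p : Ind B X * Ind B X).2.2 = b.2.
  exact: cvg_snd (ind_perm_near b).
apply: (@ind_cvg _ (nbhs (a, b))) => [x|]; last first.
  rewrite near_simpl.
  by apply: filterS (filterI perm1_near perm2_near) => p /= [-> ->].
have frozen_cvg : (fun p : Ind B X * Ind B X => p.1.1 x * p.2.1 ((a.2^-1)%g x))%g
    @ nbhs (a, b) --> (a.1 x * b.1 ((a.2^-1)%g x))%g.
  apply: continuousM => p.
  - by move=> U /(continuous_comp (@fst_continuous _ _ p) (ind_coord_continuous x _)).
  - by move=> U /(continuous_comp (@snd_continuous _ _ p) (ind_coord_continuous _ _)).
apply: cvg_trans frozen_cvg; apply: near_eq_cvg.
by apply: filterS perm1_near => p /= ->.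
Qed.

(* Likewise, near a each coordinate of the inverse is an inverted coordinate. *)
Lemma ind_inv_continuous : continuous (fun a : Ind B X => (a^-1)%g).
Proof.
move=> a; apply: ind_cvg => [x|]; last first.
  by apply: filterS (ind_perm_near a) => b /= ->.
have frozen_cvg : (fun b : Ind B X => (b.1 (a.2 x))^-1)%g @ nbhs a --> ((a.1 (a.2 x))^-1)%g.
  by move=> U /(continuous_comp (ind_coord_continuous (a.2 x) a) (@invg_continuous B _)).
apply: cvg_trans frozen_cvg; apply: near_eq_cvg.
by apply: filterS (ind_perm_near a) => b /= ->.
Qed.

HB.instance Definition _ :=
  GroupTop_isTopGroup.Build (Ind B X) ind_mul_continuous ind_inv_continuous.

Lemma ind_hausdorff : hausdorff_space B -> hausdorff_space (Ind B X).
Proof.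
move=> hB; apply: hausdorff_pair; last exact: discrete_hausdorff.
exact: (@hausdorff_product X (fun _ => B) (fun _ => hB)).
Qed.

(* Tychonoff for B^X, finiteness for Sym(X). *)
Lemma ind_compact : compact [set: B] -> compact [set: Ind B X].
Proof.
move=> cB; rewrite -setXTT; apply: compact_setX.
  have := @tychonoff X (fun _ => B) (fun _ => setT) (fun _ => cB).
  by congr compact; apply/seteqP; split.
exact/finite_compact/(@finite_finset {perm X} setT).
Qed.

End IndTopologicalGroup.

Section CosetAction.
Context {G : topGroupType} {H : set G}.
Hypothesis H_subgroup : is_subgroup H.
Context {X : {fset G}}.
Hypothesis X_transversal : forall g : G,
  exists! p : G * X, H p.1 /\ g = (p.1 * val p.2)%g.
Context {dot : X -> G -> X} {c : X -> G -> G}.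
Hypothesis dot_c : forall (x : X) (g : G),
  H (c x g) /\ (val x * g)%g = (c x g * val (dot x g))%g.

Lemma coset_decomposition_unique {a b : G} {y y' : X} :
  H a -> H b -> (a * val y = b * val y')%g -> a = b /\ y = y'.
Proof.
move=> Ha Hb E.
have [p [_ uniq_p]] := X_transversal (a * val y)%g.
have := uniq_p (a, y) (conj Ha erefl).
by rewrite (uniq_p (b, y') (conj Hb E)) => -[-> ->].
Qed.

Lemma cE x g : c x g = (val x * g * (val (dot x g))^-1)%g.
Proof. by rewrite (dot_c x g).2 mulgK. Qed.

Lemma dotP x g y : dot x g = y <-> H (val x * g * (val y)^-1)%g.
Proof.
split=> [<-|Hy]; first by rewrite -cE; exact: (dot_c x g).1.
have E : (c x g * val (dot x g) = (val x * g * (val y)^-1) * val y)%g.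
  by rewrite mulgKV -(dot_c x g).2.
by have [_ ->] := coset_decomposition_unique (dot_c x g).1 Hy E.
Qed.

Lemma dot_c_mul x g h :
  dot x (g * h)%g = dot (dot x g) h /\ c x (g * h)%g = (c x g * c (dot x g) h)%g.
Proof.
have [_ HM _] := H_subgroup.
have E : (c x (g * h) * val (dot x (g * h)) =
          (c x g * c (dot x g) h) * val (dot (dot x g) h))%g.
  by rewrite -(dot_c x (g * h)%g).2 mulgA (dot_c x g).2 -!mulgA -(dot_c (dot x g) h).2.
by have [-> ->] :=
  coset_decomposition_unique (dot_c _ _).1 (HM _ _ (dot_c _ _).1 (dot_c _ _).1) E.
Qed.

Lemma dot1 x : dot x 1%g = x.
Proof. by apply/dotP; rewrite mulg1 mulgV; case: H_subgroup. Qed.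

Hypothesis H_closed : closed H.

(* H closed: for y <> x.g0 the set of g with x g y^-1 outside H is a
   neighbourhood of g0, and X is finite, so x.g is locally constant in g. *)
Lemma dot_near x g0 : \forall g \near g0, dot x g = dot x g0.
Proof.
have away y : y != dot x g0 -> \forall g \near g0, ~ H (val x * g * (val y)^-1)%g.
  move=> y_neq; apply: (@mulg_two_sided_continuous G (val x) ((val y)^-1)%g g0 (~` H)).
  apply: open_nbhs_nbhs.
  by split; [rewrite openC | move/dotP => y_eq; rewrite y_eq eqxx in y_neq].
have {}away : \forall g \near g0, forall y, y != dot x g0 -> ~ H (val x * g * (val y)^-1)%g.
  apply: filter_forall => y; have [->|/away] := eqVneq y (dot x g0); last exact: filterS.
  by apply: nearW.
apply: filterS away => g away; have [//|neq] := eqVneq (dot x g) (dot x g0).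
by have := away _ neq; rewrite -dotP.
Qed.

Lemma c_near x g0 : \forall g \near g0, c x g = (val x * g * (val (dot x g0))^-1)%g.
Proof. by apply: filterS (dot_near x g0) => g e; rewrite cE e. Qed.

Lemma c_continuous {B : topologicalType} {beta : G -> B} x :
  {within H, continuous beta} -> continuous (fun g => beta (c x g)).
Proof.
move=> cbeta g0; pose m g := (val x * g * (val (dot x g0))^-1)%g.
have Hm : \forall g \near g0, H (m g).
  by apply: filterS (c_near x g0) => g cm; rewrite /m -cm; exact: (dot_c x g).1.
have cbm : {for g0, continuous (beta \o m)}.
  exact: within_continuous_comp cbeta (@mulg_two_sided_continuous G _ _) (nbhs_singleton Hm) Hm.
have cbm0 : (beta \o m) g0 = beta (c x g0) by rewrite /= /m -cE.
rewrite /continuous_at -cbm0.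
apply: cvg_trans cbm; apply: near_eq_cvg.
by apply: filterS (c_near x g0) => g ->.
Qed.

End CosetAction.

Section InducedBohr.
Context {G : topGroupType} {H : set G}.
Hypotheses (H_subgroup : is_subgroup H) (H_closed : closed H).
Context {X : {fset G}}.
Hypothesis X_transversal : forall g : G,
  exists! p : G * X, H p.1 /\ g = (p.1 * val p.2)%g.
Context {B : topGroupType} {beta : G -> B}.
Hypotheses (beta_hom : hom_on H beta) (beta_continuous : {within H, continuous beta}).
Context {dot : X -> G -> X} {c : X -> G -> G}.
Hypothesis dot_c : forall (x : X) (g : G),
  H (c x g) /\ (val x * g)%g = (c x g * val (dot x g))%g.
Context {sigma : G -> {perm X}}.
Hypothesis sigmaE : forall (g : G) (x : X), sigma g x = dot x (g^-1)%g.

Definition beta_ind (g : G) : Ind B X :=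
  ((fun x : X => beta (c x g)) : prod_topology _, sigma g : discrete_topology _).

Lemma sigmaV g x : ((sigma g)^-1)%g x = dot x g.
Proof.
apply: (@perm_inj _ (sigma g)).
by rewrite permKV sigmaE -(dot_c_mul H_subgroup X_transversal dot_c x g (g^-1)%g).1 mulgV
  (dot1 H_subgroup X_transversal dot_c).
Qed.

(* beta_ind is a homomorphism: cocycle identity and action property. *)
Lemma beta_ind_mul g h : beta_ind (g * h)%g = (beta_ind g * beta_ind h)%g.
Proof.
have dot_mul := dot_c_mul H_subgroup X_transversal dot_c.
congr pair.
- apply: funext => x /=; rewrite sigmaV (dot_mul x g h).2.
  by apply: beta_hom; exact: (dot_c _ _).1.
- by apply/permP => x; rewrite permM !sigmaE invMg (dot_mul x _ _).1.
Qed.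

(* beta_ind is continuous: its coordinates are continuous and its permutation
   part is locally constant. *)
Lemma beta_ind_continuous : continuous beta_ind.
Proof.
move=> g0.
have coords x : (fun g => (beta_ind g).1 x) @ g0 --> (beta_ind g0).1 x.
  exact: (c_continuous X_transversal dot_c H_closed x beta_continuous g0).
have dot_inv_near x : \forall g \near g0, dot x (g^-1)%g = dot x (g0^-1)%g.
  exact: (@invg_continuous G g0 _ (dot_near X_transversal dot_c H_closed x (g0^-1)%g)).
have perm_near : \forall g \near g0, (beta_ind g).2 = (beta_ind g0).2.
  apply: filterS (filter_forall _ dot_inv_near) => g dot_eq /=.
  by apply/permP => x; rewrite !sigmaE dot_eq.
exact: ind_cvg coords perm_near.
Qed.

Lemma beta_ind_compact_group :
  compact [set: B] -> hausdorff_space B -> compact_group_on (closure (range beta_ind)).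
Proof.
move=> cB hB; apply: closure_compact_group.
- exact: hom_range_subgroup beta_ind_mul.
- exact: ind_compact.
- exact: ind_hausdorff.
Qed.

Section Lift.
Context {L : topGroupType}.
Variables (f : G -> L) (alphaH : B -> L) (x0 : X).
Hypothesis f_mul : forall g h, f (g * h)%g = (f g * f h)%g.
Hypothesis f_beta : forall a, H a -> f a = alphaH (beta a).

Definition ind_lift (k : Ind B X) : L :=
  ((f (val x0))^-1 * alphaH (k.1 x0) * f (val ((k.2^-1)%g x0)))%g.

(* From x0 g = c(x0, g) (x0.g): f g = f(x0)^-1 f(c(x0, g)) f(x0.g). *)
Lemma ind_lift_factor g : f g = ind_lift (beta_ind g).
Proof.
rewrite /ind_lift /= sigmaV -f_beta; last exact: (dot_c _ _).1.
by rewrite -homV // -!f_mul -mulgA -(dot_c x0 g).2 mulKg.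
Qed.

(* ind_lift is continuous: a product of a constant, a coordinate and a
   locally constant factor. *)
Lemma ind_lift_continuous : continuous alphaH -> continuous ind_lift.
Proof.
move=> calphaH; apply: continuousM; first apply: continuousM.
- exact: cst_continuous.
- by move=> k U /(continuous_comp (ind_coord_continuous x0 k) (calphaH _)).
- move=> k; apply: cvg_near_cst.
  by apply: filterS (ind_perm_near k) => k' ->.
Qed.

(* ind_lift is multiplicative on the range of beta_ind, hence on its closure. *)
Lemma ind_lift_hom :
  hausdorff_space L -> continuous alphaH -> hom_on (closure (range beta_ind)) ind_lift.
Proof.
move=> hL calphaH; apply: hom_closure hL (ind_lift_continuous calphaH) _.
by move=> _ _ [g _ <-] [h _ <-]; rewrite -beta_ind_mul -!ind_lift_factor f_mul.
Qed.

End Lift.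

End InducedBohr.

Theorem proposition2p5
  (G : topGroupType) (H : set G)
  (H_subgroup : is_subgroup H) (H_closed : closed H)
  (X : {fset G})
  (X_transversal : forall g : G,
     exists! p : G * X, H p.1 /\ g = (p.1 * val p.2)%g)
  (B : topGroupType) (beta : G -> B)
  (H_bohr : bohr_compactification H [set: B] beta)
  (dot : X -> G -> X) (c : X -> G -> G)
  (dot_c : forall (x : X) (g : G),
     H (c x g) /\ (val x * g)%g = (c x g * val (dot x g))%g)
  (sigma : G -> {perm X})
  (sigmaE : forall (g : G) (x : X), sigma g x = dot x (g^-1)%g) :
  let beta_t : G -> Ind B X :=
    fun g => ((fun x : X => beta (c x g)) : prod_topology _, sigma g : discrete_topology _) in
  (forall g h : G, beta_t (g * h)%g = (beta_t g * beta_t h)%g) /\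
  continuous beta_t /\
  bohr_compactification [set: G] (closure (range beta_t)) beta_t.
Proof.
(* The map of the statement is beta_ind. *)
rewrite -[fun g => _]/(@beta_ind G X B beta c sigma).
have [[_ _ _ B_compact /hausdorff_subspaceT B_hausdorff]
      [[_ [beta_hom beta_cont]] [_ univ]]] := H_bohr.
have beta_t_mul := beta_ind_mul H_subgroup X_transversal beta_hom dot_c sigmaE.
have beta_t_cont := beta_ind_continuous H_closed X_transversal beta_cont dot_c sigmaE.
split; first exact: beta_t_mul.
split; first exact: beta_t_cont.
split.
  exact: (beta_ind_compact_group H_subgroup X_transversal beta_hom dot_c sigmaE
    B_compact B_hausdorff).
split.
  split; first exact: subset_closure.
  by split; [move=> g h _ _; exact: beta_t_mul | exact: continuous_subspaceT].
(* Density is trivial; for the universal property extend f from H to B by the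
   Bohr property of beta, pick x0 in X and factor f through ind_lift. *)
split => // L L_compact L_hausdorff f f_hom f_cont.
have f_mul g h : f (g * h)%g = (f g * f h)%g by exact: f_hom.
have [alphaH [_ /(continuous_subspace_setT _).2 alphaH_cont f_beta]] :=
  univ L L_compact L_hausdorff f (fun a b _ _ => f_mul a b)
    (continuous_subspaceW (fun _ _ => I) f_cont).
have [[_ x0] _] := X_transversal 1%g.
exists (ind_lift f alphaH x0); split.
- exact: (ind_lift_hom H_subgroup X_transversal beta_hom dot_c sigmaE
    f alphaH x0 f_mul f_beta L_hausdorff alphaH_cont).
- exact/continuous_subspaceT/ind_lift_continuous.
- move=> g _; exact: (ind_lift_factor H_subgroup X_transversal dot_c sigmaE
    f alphaH x0 f_mul f_beta g).
Qed.
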